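(* Let $\mathcal{A}$ be an additive category and let $(\mathcal{E}_\omega)_{\omega\in\Omega}$ be a nonempty family of exact structures on $\mathcal{A}$. Then the intersection $\bigcap_{\omega\in\Omega}\mathcal{E}_\omega=\{\xi : \xi\in\mathcal{E}_\omega\text{ for all }\omega\in\Omega\}$ is an exact structure on $\mathcal{A}$.
   Context: An exact structure (in the sense of Quillen) on an additive category $\mathcal{A}$ is a class $\mathcal{E}$ of kernel–cokernel pairs $(i,d)$ (i.e. $i$ is a kernel of $d$ and $d$ is a cokernel of $i$), closed under isomorphisms, such that: identities are admissible monics and admissible epics; admissible monics are closed under composition, and so are admissible epics; the pushout of an admissible monic along an arbitrary morphism exists and is an admissible monic; the pullback of an admissible epic along an arbitrary morphism exists and is an admissible epic. Here an admissible monic is a morphism $i$ with $(i,d)\in\mathcal{E}$ for some $d$, and an admissible epic is a morphism $d$ with $(i,d)\in\mathcal{E}$ for some $i$. *)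

From HB Require Import structures.
From mathcomp Require Import all_boot all_algebra.
Set Implicit Arguments. Unset Strict Implicit. Unset Printing Implicit Defensive.
Import GRing.Theory.
Local Open Scope ring_scope.

(** Additive category: Ab-enriched (preadditive) category with a zero object
    and binary biproducts.  [comp g f] is "g after f". *)
Record AddCat := {
  obj :> Type;
  mor : obj -> obj -> zmodType;
  comp : forall a b c : obj, mor b c -> mor a b -> mor a c;
  idm : forall a : obj, mor a a;
  comp_assoc : forall a b c d (h : mor c d) (g : mor b c) (f : mor a b),
      comp h (comp g f) = comp (comp h g) f;
  comp_id_l : forall a b (f : mor a b), comp (idm b) f = f;
  comp_id_r : forall a b (f : mor a b), comp f (idm a) = f;
  comp_addl : forall a b c (g g' : mor b c) (f : mor a b),
      comp (g + g') f = comp g f + comp g' f;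
  comp_addr : forall a b c (g : mor b c) (f f' : mor a b),
      comp g (f + f') = comp g f + comp g f';
  (* zero object: an object whose identity is the zero morphism *)
  has_zero : exists z : obj, idm z = 0;
  has_biprod : forall a b : obj, exists (p : obj) (i1 : mor a p) (i2 : mor b p)
      (p1 : mor p a) (p2 : mor p b),
      [/\ comp p1 i1 = idm a, comp p2 i2 = idm b, comp p1 i2 = 0,
          comp p2 i1 = 0 & comp i1 p1 + comp i2 p2 = idm p]
}.

Arguments comp {a0 a b c} _ _.
Arguments idm {a0} a.

Section ExactDefs.
Variable A : AddCat.

Definition pair_class := forall a b c : A, mor a b -> mor b c -> Prop.

Definition is_kernel (a b c : A) (i : mor a b) (d : mor b c) : Prop :=
  comp d i = 0 /\
  forall (x : A) (f : mor x b), comp d f = 0 -> exists! g : mor x a, comp i g = f.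

Definition is_cokernel (a b c : A) (i : mor a b) (d : mor b c) : Prop :=
  comp d i = 0 /\
  forall (y : A) (f : mor b y), comp f i = 0 -> exists! g : mor c y, comp g d = f.

Definition kernel_cokernel_pair (a b c : A) (i : mor a b) (d : mor b c) : Prop :=
  is_kernel i d /\ is_cokernel i d.

Definition is_iso (a b : A) (f : mor a b) : Prop :=
  exists g : mor b a, comp g f = idm a /\ comp f g = idm b.

Definition adm_monic (E : pair_class) (a b : A) (i : mor a b) : Prop :=
  exists (c : A) (d : mor b c), E a b c i d.

Definition adm_epic (E : pair_class) (b c : A) (d : mor b c) : Prop :=
  exists (a : A) (i : mor a b), E a b c i d.

Definition is_pushout (a b a' b' : A) (i : mor a b) (f : mor a a')
  (i' : mor a' b') (f' : mor b b') : Prop :=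
  comp f' i = comp i' f /\
  forall (y : A) (u : mor b y) (v : mor a' y), comp u i = comp v f ->
    exists! w : mor b' y, comp w f' = u /\ comp w i' = v.

Definition is_pullback (b c b' c' : A) (d : mor b c) (g : mor c' c)
  (d' : mor b' c') (g' : mor b' b) : Prop :=
  comp d g' = comp g d' /\
  forall (x : A) (u : mor x b) (v : mor x c'), comp d u = comp g v ->
    exists! w : mor x b', comp g' w = u /\ comp d' w = v.

Definition exact_structure (E : pair_class) : Prop :=
  (forall a b c (i : mor a b) (d : mor b c), E a b c i d -> kernel_cokernel_pair i d) /\
  (forall a b c (i : mor a b) (d : mor b c) a' b' c' (i' : mor a' b') (d' : mor b' c')
            (fa : mor a a') (fb : mor b b') (fc : mor c c'),
        is_iso fa -> is_iso fb -> is_iso fc ->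
        comp fb i = comp i' fa -> comp fc d = comp d' fb ->
        E a b c i d -> E a' b' c' i' d') /\
  (forall a : A, adm_monic E (idm a) /\ adm_epic E (idm a)) /\
  ((forall a b c (f : mor a b) (g : mor b c),
        adm_monic E f -> adm_monic E g -> adm_monic E (comp g f)) /\
     (forall a b c (f : mor a b) (g : mor b c),
        adm_epic E f -> adm_epic E g -> adm_epic E (comp g f))) /\
  (forall a b a' (i : mor a b) (f : mor a a'), adm_monic E i ->
        exists (b' : A) (i' : mor a' b') (f' : mor b b'),
          is_pushout i f i' f' /\ adm_monic E i') /\
  (forall b c c' (d : mor b c) (g : mor c' c), adm_epic E d ->
        exists (b' : A) (d' : mor b' c') (g' : mor b' b),
          is_pullback d g d' g' /\ adm_epic E d').

End ExactDefs.

(* Every admissible monic i of an exact structure E forms a pair (i, d) of E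
   with ANY cokernel d of i, since cokernels are unique up to isomorphism and
   E is closed under isomorphisms; dually for admissible epics and kernels.
   Hence a morphism is an admissible monic (epic) of the intersection iff it
   is one in every E_w, and likewise every pushout of an admissible monic
   (pullback of an admissible epic) is admissible, whichever one is chosen.
   Each axiom for the intersection then follows from the same axiom in one
   fixed E_w0. *)
From Pilot Require Import Defs.
From HB Require Import structures.
From mathcomp Require Import all_boot all_algebra.
Set Implicit Arguments. Unset Strict Implicit.
Local Notation comp := Defs.comp.

Lemma exists_unique_eq (T : Type) (P : T -> Prop) (x y : T) :
  (exists! z, P z) -> P x -> P y -> x = y.
Proof. by move=> [z [_ Pz_uniq]] Px Py; rewrite -(Pz_uniq x Px) -(Pz_uniq y Py). Qed.

Section UniversalProperties.
Variable A : AddCat.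

Lemma iso_idm (a : A) : is_iso (idm a).
Proof. by exists (idm a); rewrite comp_id_l. Qed.

Lemma cokernel_unique_iso (a b c c' : A) (i : mor a b) (d : mor b c) (d' : mor b c') :
  is_cokernel i d -> is_cokernel i d' -> exists g : mor c c', is_iso g /\ comp g d = d'.
Proof.
case=> di0 Ud [d'i0 Ud'].
have [g [gd _]] := Ud _ d' d'i0.
have [h [hd _]] := Ud' _ d di0.
exists g; split=> //; exists h; split.
- by apply: (exists_unique_eq (Ud _ d di0)); rewrite ?comp_id_l // -comp_assoc gd hd.
- by apply: (exists_unique_eq (Ud' _ d' d'i0)); rewrite ?comp_id_l // -comp_assoc hd gd.
Qed.

Lemma kernel_unique_iso (a a' b c : A) (i : mor a b) (i' : mor a' b) (d : mor b c) :
  is_kernel i d -> is_kernel i' d -> exists g : mor a a', is_iso g /\ comp i' g = i.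
Proof.
case=> di0 Ui [di'0 Ui'].
have [g [gi _]] := Ui' _ i di0.
have [h [hi _]] := Ui _ i' di'0.
exists g; split=> //; exists h; split.
- by apply: (exists_unique_eq (Ui _ i di0)); rewrite ?comp_id_r // comp_assoc hi gi.
- by apply: (exists_unique_eq (Ui' _ i' di'0)); rewrite ?comp_id_r // comp_assoc gi hi.
Qed.

Lemma pushout_unique_iso (a b a' b0 b1 : A) (i : mor a b) (f : mor a a')
    (i0 : mor a' b0) (f0 : mor b b0) (i1 : mor a' b1) (f1 : mor b b1) :
  is_pushout i f i0 f0 -> is_pushout i f i1 f1 ->
  exists psi : mor b1 b0, is_iso psi /\ comp psi i1 = i0.
Proof.
case=> sq0 U0 [sq1 U1].
have [phi [[phi_f phi_i] _]] := U0 _ f1 i1 sq1.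
have [psi [[psi_f psi_i] _]] := U1 _ f0 i0 sq0.
exists psi; split=> //; exists phi; split.
- by apply: (exists_unique_eq (U1 _ f1 i1 sq1));
    rewrite ?comp_id_l // -!comp_assoc ?phi_f ?phi_i ?psi_f ?psi_i.
- by apply: (exists_unique_eq (U0 _ f0 i0 sq0));
    rewrite ?comp_id_l // -!comp_assoc ?phi_f ?phi_i ?psi_f ?psi_i.
Qed.

Lemma pullback_unique_iso (b c c' b0 b1 : A) (d : mor b c) (g : mor c' c)
    (d0 : mor b0 c') (g0 : mor b0 b) (d1 : mor b1 c') (g1 : mor b1 b) :
  is_pullback d g d0 g0 -> is_pullback d g d1 g1 ->
  exists phi : mor b0 b1, is_iso phi /\ comp d1 phi = d0.
Proof.
case=> sq0 U0 [sq1 U1].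
have [phi [[phi_g phi_d] _]] := U1 _ g0 d0 sq0.
have [psi [[psi_g psi_d] _]] := U0 _ g1 d1 sq1.
exists phi; split=> //; exists psi; split.
- by apply: (exists_unique_eq (U0 _ g0 d0 sq0));
    rewrite ?comp_id_r // !comp_assoc ?phi_g ?phi_d ?psi_g ?psi_d.
- by apply: (exists_unique_eq (U1 _ g1 d1 sq1));
    rewrite ?comp_id_r // !comp_assoc ?phi_g ?phi_d ?psi_g ?psi_d.
Qed.

End UniversalProperties.

Section ExactStructure.
Variables (A : AddCat) (E : pair_class A).
Hypothesis HE : exact_structure E.

Lemma exact_kernel_cokernel (a b c : A) (i : mor a b) (d : mor b c) :
  E i d -> kernel_cokernel_pair i d.
Proof. by case: HE => kc _; apply: kc. Qed.

Lemma exact_iso_closed (a b c : A) (i : mor a b) (d : mor b c)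
    (a' b' c' : A) (i' : mor a' b') (d' : mor b' c')
    (fa : mor a a') (fb : mor b b') (fc : mor c c') :
  is_iso fa -> is_iso fb -> is_iso fc ->
  comp fb i = comp i' fa -> comp fc d = comp d' fb -> E i d -> E i' d'.
Proof. by case: HE => _ [isoc _]; apply: isoc. Qed.

Lemma exact_idm_adm (a : A) : adm_monic E (idm a) /\ adm_epic E (idm a).
Proof. by case: HE => _ [_ [idc _]]. Qed.

Lemma exact_comp_adm_monic (a b c : A) (f : mor a b) (g : mor b c) :
  adm_monic E f -> adm_monic E g -> adm_monic E (comp g f).
Proof. by case: HE => _ [_ [_ [[compc _] _]]]; apply: compc. Qed.

Lemma exact_comp_adm_epic (a b c : A) (f : mor a b) (g : mor b c) :
  adm_epic E f -> adm_epic E g -> adm_epic E (comp g f).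
Proof. by case: HE => _ [_ [_ [[_ compc] _]]]; apply: compc. Qed.

Lemma exact_pushout (a b a' : A) (i : mor a b) (f : mor a a') :
  adm_monic E i -> exists (b' : A) (i' : mor a' b') (f' : mor b b'),
    is_pushout i f i' f' /\ adm_monic E i'.
Proof. by case: HE => _ [_ [_ [_ [poc _]]]]; apply: poc. Qed.

Lemma exact_pullback (b c c' : A) (d : mor b c) (g : mor c' c) :
  adm_epic E d -> exists (b' : A) (d' : mor b' c') (g' : mor b' b),
    is_pullback d g d' g' /\ adm_epic E d'.
Proof. by case: HE => _ [_ [_ [_ [_ pbc]]]]; apply: pbc. Qed.

Lemma exact_pair_of_cokernel (a b c c' : A) (i : mor a b) (d : mor b c) (d' : mor b c') :
  E i d -> is_cokernel i d' -> E i d'.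
Proof.
move=> Eid coker_d'.
have [g [iso_g gd]] := cokernel_unique_iso (proj2 (exact_kernel_cokernel Eid)) coker_d'.
apply: (exact_iso_closed (iso_idm a) (iso_idm b) iso_g _ _ Eid).
  by rewrite comp_id_l comp_id_r.
by rewrite comp_id_r.
Qed.

Lemma exact_pair_of_kernel (a a' b c : A) (i : mor a b) (i' : mor a' b) (d : mor b c) :
  E i d -> is_kernel i' d -> E i' d.
Proof.
move=> Eid ker_i'.
have [g [iso_g ig]] := kernel_unique_iso (proj1 (exact_kernel_cokernel Eid)) ker_i'.
apply: (exact_iso_closed iso_g (iso_idm b) (iso_idm c) _ _ Eid).
  by rewrite comp_id_l ig.
by rewrite comp_id_l comp_id_r.
Qed.

Lemma adm_monic_comp_iso (a b b' : A) (i : mor a b) (psi : mor b b') :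
  adm_monic E i -> is_iso psi -> adm_monic E (comp psi i).
Proof.
move=> [c [d Eid]] [psi' [psi'psi psipsi']].
exists c, (comp d psi').
apply: (exact_iso_closed (iso_idm a) (_ : is_iso psi) (iso_idm c) _ _ Eid).
- by exists psi'.
- by rewrite comp_id_r.
- by rewrite comp_id_l -comp_assoc psi'psi comp_id_r.
Qed.

Lemma adm_epic_comp_iso (b b' c : A) (d : mor b c) (phi : mor b' b) :
  adm_epic E d -> is_iso phi -> adm_epic E (comp d phi).
Proof.
move=> [a [i Eid]] [phi' [phi'phi phiphi']].
exists a, (comp phi' i).
apply: (exact_iso_closed (iso_idm a) (_ : is_iso phi') (iso_idm c) _ _ Eid).
- by exists phi.
- by rewrite comp_id_r.
- by rewrite comp_id_l -comp_assoc phiphi' comp_id_r.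
Qed.

Lemma pushout_adm_monic (a b a' b' : A) (i : mor a b) (f : mor a a')
    (i' : mor a' b') (f' : mor b b') :
  adm_monic E i -> is_pushout i f i' f' -> adm_monic E i'.
Proof.
move=> adm_i po.
have [b1 [i1 [f1 [po1 adm_i1]]]] := exact_pushout f adm_i.
have [psi [iso_psi <-]] := pushout_unique_iso po po1.
exact: adm_monic_comp_iso.
Qed.

Lemma pullback_adm_epic (b c c' b' : A) (d : mor b c) (g : mor c' c)
    (d' : mor b' c') (g' : mor b' b) :
  adm_epic E d -> is_pullback d g d' g' -> adm_epic E d'.
Proof.
move=> adm_d pb.
have [b1 [d1 [g1 [pb1 adm_d1]]]] := exact_pullback g adm_d.
have [phi [iso_phi <-]] := pullback_unique_iso pb pb1.
exact: adm_epic_comp_iso.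
Qed.

End ExactStructure.

Section Intersection.
Variables (A : AddCat) (Omega : Type) (E : Omega -> pair_class A) (w0 : Omega).
Hypothesis HE : forall w, exact_structure (E w).

Definition bigcap_pair_class : pair_class A :=
  fun (a b c : A) (i : mor a b) (d : mor b c) => forall w : Omega, E w i d.

Lemma adm_monic_bigcap (a b : A) (i : mor a b) :
  adm_monic bigcap_pair_class i <-> forall w, adm_monic (E w) i.
Proof.
split=> [[c [d Eid]] w | adm_i]; first by exists c, d.
have [c [d Eid]] := adm_i w0.
have coker_d := proj2 (exact_kernel_cokernel (HE w0) Eid).
exists c, d => w; have [c' [d' Eid']] := adm_i w.
exact: exact_pair_of_cokernel Eid' coker_d.
Qed.

Lemma adm_epic_bigcap (b c : A) (d : mor b c) :
  adm_epic bigcap_pair_class d <-> forall w, adm_epic (E w) d.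
Proof.
split=> [[a [i Eid]] w | adm_d]; first by exists a, i.
have [a [i Eid]] := adm_d w0.
have ker_i := proj1 (exact_kernel_cokernel (HE w0) Eid).
exists a, i => w; have [a' [i' Eid']] := adm_d w.
exact: exact_pair_of_kernel Eid' ker_i.
Qed.

Lemma exact_bigcap : exact_structure bigcap_pair_class.
Proof.
split; [|split; [|split; [|split; [split|split]]]].
- by move=> a b c i d /(_ w0) /(exact_kernel_cokernel (HE w0)).
- move=> a b c i d a' b' c' i' d' fa fb fc iso_a iso_b iso_c sq_i sq_d Eid w.
  exact: (exact_iso_closed (HE w) iso_a iso_b iso_c sq_i sq_d (Eid w)).
- by move=> a; split; [apply/adm_monic_bigcap | apply/adm_epic_bigcap] => w;
    case: (exact_idm_adm (HE w) a).
- move=> a b c f g /adm_monic_bigcap adm_f /adm_monic_bigcap adm_g.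
  apply/adm_monic_bigcap => w.
  exact: (exact_comp_adm_monic (HE w) (adm_f w) (adm_g w)).
- move=> a b c f g /adm_epic_bigcap adm_f /adm_epic_bigcap adm_g.
  apply/adm_epic_bigcap => w.
  exact: (exact_comp_adm_epic (HE w) (adm_f w) (adm_g w)).
- move=> a b a' i f /adm_monic_bigcap adm_i.
  have [b' [i' [f' [po _]]]] := exact_pushout (HE w0) f (adm_i w0).
  exists b', i', f'; split=> //; apply/adm_monic_bigcap => w.
  exact: (pushout_adm_monic (HE w) (adm_i w) po).
- move=> b c c' d g /adm_epic_bigcap adm_d.
  have [b' [d' [g' [pb _]]]] := exact_pullback (HE w0) g (adm_d w0).
  exists b', d', g'; split=> //; apply/adm_epic_bigcap => w.
  exact: (pullback_adm_epic (HE w) (adm_d w) pb).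
Qed.

End Intersection.

Theorem lemma5p2 (A : AddCat) (Omega : Type) (E : Omega -> pair_class A) :
  inhabited Omega ->
  (forall w : Omega, exact_structure (E w)) ->
  exact_structure (fun (a b c : A) (i : mor a b) (d : mor b c) =>
                     forall w : Omega, E w a b c i d).
Proof. by move=> [w0] HE; exact: exact_bigcap w0 HE. Qed.
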